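(* The top cycle is the only robust dominant set rule that satisfies set non-imposition.
   Context: Let $A$ be a finite set of alternatives; preference profiles $R$ consist of strict total orders $\succ_i$ on $A$ for the voters $i$ of a finite non-empty electorate $N\subseteq\{1,2,\dots\}$, and $\mathcal{R}^*(A)$ is the set of all such profiles over all electorates. The majority margin is $g_R(x,y)=|\{i: x\succ_i y\}|-|\{i: y\succ_i x\}|$; $x\succsim_R y$ iff $g_R(x,y)\ge0$, with strict part $\succ_R$. A non-empty $X\subseteq A$ is dominant in $R$ if $x\succ_R y$ for all $x\in X$, $y\in A\setminus X$. The top cycle $\mathrm{TC}(R)$ is the inclusion-smallest dominant set. A social choice correspondence (SCC) is a map $f:\mathcal{R}^*(A)\to 2^A\setminus\{\emptyset\}$. $f$ is a dominant set rule if $f(R)$ is dominant in $R$ for every $R$; it is robust if $f(R')\subseteq f(R)$ for all profiles $R,R'$ such that $f(R)$ is dominant in $R'$. $f$ satisfies set non-imposition if for every non-empty $X\subseteq A$ there is a profile $R$ with $f(R)=X$. *)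

From HB Require Import structures.
From mathcomp Require Import all_boot all_order all_algebra.
From mathcomp Require Import finmap.
Set Implicit Arguments. Unset Strict Implicit. Unset Printing Implicit Defensive.
Import Order.TTheory GRing.Theory Num.Theory.

Local Open Scope fset_scope.

Section SocialChoice.
Variable A : finType.

(* A strict total order on A, encoded by its (finite) graph:
   r (x, y) = true  means  x is strictly preferred to y. *)
Definition is_strict_total (r : {ffun A * A -> bool}) : bool :=
  [&& [forall x, ~~ r (x, x)],
      [forall x, forall y, forall z, r (x, y) && r (y, z) ==> r (x, z)] &
      [forall x, forall y, (x != y) ==> r (x, y) || r (y, x)]].

Definition sorder := {r : {ffun A * A -> bool} | is_strict_total r}.

Definition prefers (o : sorder) (x y : A) : bool := sval o (x, y).

(* A preference profile: a finite map from voters (natural numbers) to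
   strict total orders; the electorate N is its domain, which must be
   non-empty and contained in {1, 2, ...}. *)
Definition is_profile (R : {fmap nat -> sorder}) : bool :=
  (domf R != fset0) && (0%N \notin domf R).

Definition profile := {R : {fmap nat -> sorder} | is_profile R}.

Definition electorate (R : profile) : {fset nat} := domf (sval R).

Definition margin (R : profile) (x y : A) : int :=
  (#|[set i : domf (sval R) | prefers (sval R i) x y]|%:Z
   - #|[set i : domf (sval R) | prefers (sval R i) y x]|%:Z)%R.

Definition maj_ge (R : profile) (x y : A) : bool := (0 <= margin R x y)%R.

Definition maj_gt (R : profile) (x y : A) : bool :=
  maj_ge R x y && ~~ maj_ge R y x.

Definition dominant (R : profile) (X : {set A}) : bool :=
  (X != set0) && [forall x in X, forall y in ~: X, maj_gt R x y].

(* Top cycle: the inclusion-smallest dominant set, i.e. the intersection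
   of all dominant sets (dominant sets are nested, and A itself is dominant
   whenever A is non-empty). *)
Definition top_cycle (R : profile) : {set A} :=
  \bigcap_(X : {set A} | dominant R X) X.

Definition is_SCC (f : profile -> {set A}) : Prop :=
  forall R, f R != set0.

Definition dominant_set_rule (f : profile -> {set A}) : Prop :=
  forall R, dominant R (f R).

Definition robust (f : profile -> {set A}) : Prop :=
  forall R R' : profile, dominant R' (f R) -> f R' \subset f R.

Definition set_non_imposition (f : profile -> {set A}) : Prop :=
  forall X : {set A}, X != set0 -> exists R : profile, f R = X.

End SocialChoice.

From HB Require Import structures.
From mathcomp Require Import all_boot all_order all_algebra.
From mathcomp Require Import finmap.
From mathcomp Require Import zify.
Set Implicit Arguments. Unset Strict Implicit. Unset Printing Implicit Defensive.
Import Order.TTheory GRing.Theory Num.Theory.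

(* Dominant sets of a profile are nested, so the top cycle is the smallest of
   them and is itself dominant.  If [f] is a robust dominant set rule, then
   [f R] contains [TC(R)]; by set non-imposition some profile [R'] has
   [f R' = TC(R)], and since this set is dominant in [R], robustness yields
   [f R \subset f R' = TC(R)].  Conversely the top cycle is robust because it
   lies inside every dominant set, and it is set non-imposing: in a profile of
   two voters who both rank [X] above its complement but order [X] in opposite
   ways, all pairs in [X] tie, so no proper subset of [X] is dominant. *)

Section Majority.
Variable A : finType.
Implicit Types (R : profile A) (X Y : {set A}).

Lemma prefers_asym (o : sorder A) x y : prefers o x y -> ~~ prefers o y x.
Proof.
case: o => r r_order; rewrite /prefers /= => rxy.
case/and3P: r_order => /forallP irr /forallP trans _.
apply/negP => ryx; move: (trans x) => /forallP/(_ y)/forallP/(_ x).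
by rewrite rxy ryx (negbTE (irr x)).
Qed.

Lemma margin_sym R x y : margin R y x = (- margin R x y)%R.
Proof. by rewrite /margin opprB. Qed.

Lemma maj_gtE R x y : maj_gt R x y = (0 < margin R x y)%R.
Proof.
rewrite /maj_gt /maj_ge [margin R y x]margin_sym oppr_ge0 -ltNge.
by apply: andb_idl => /ltW.
Qed.

Lemma maj_gt_asym R x y : maj_gt R x y -> ~~ maj_gt R y x.
Proof. by case/andP=> xy _; rewrite /maj_gt xy andbF. Qed.

Lemma dominantT R : [set: A] != set0 -> dominant R [set: A].
Proof.
move=> A0; apply/andP; split=> //.
by apply/forall_inP=> x _; apply/forall_inP=> y; rewrite !inE.
Qed.

Lemma dominant_total R X Y :
  dominant R X -> dominant R Y -> (X \subset Y) || (Y \subset X).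
Proof.
move=> /andP [_ /forall_inP domX] /andP [_ /forall_inP domY].
case: (boolP (X \subset Y)) => //= /subsetPn [x xX xNY].
apply/subsetP=> y yY; apply: contraT => yNX.
have xy : maj_gt R x y by apply: (forall_inP (domX x xX)); rewrite inE.
have yx : maj_gt R y x by apply: (forall_inP (domY y yY)); rewrite inE.
by move: (maj_gt_asym xy); rewrite yx.
Qed.

Lemma top_cycle_min R X : dominant R X -> top_cycle R \subset X.
Proof. exact: bigcap_inf. Qed.

Lemma top_cycle_eq R X :
  dominant R X -> (forall Y, dominant R Y -> X \subset Y) -> top_cycle R = X.
Proof.
move=> domX minX; apply/eqP; rewrite eqEsubset top_cycle_min //.
by apply/bigcapsP.
Qed.

Lemma top_cycle_dominant R X : dominant R X -> dominant R (top_cycle R).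
Proof.
move=> domX.
have [Z domZ minZ] := arg_minnP (fun Z : {set A} => #|Z|) domX.
rewrite (top_cycle_eq domZ) // => Y domY.
case/orP: (dominant_total domZ domY) => // sYZ.
suff -> : Z = Y by [].
by apply/eqP; rewrite eq_sym eqEcard sYZ minZ.
Qed.

End Majority.

Section TwoVoterProfiles.
Variable A : finType.
Local Open Scope fset_scope.

Lemma rank_order_subproof (rk : A -> nat) : injective rk ->
  is_strict_total [ffun p : A * A => (rk p.1 < rk p.2)%N].
Proof.
move=> rk_inj; apply/and3P; split.
- by apply/forallP => x; rewrite ffunE ltnn.
- apply/forallP => x; apply/forallP => y; apply/forallP => z; apply/implyP.
  by rewrite !ffunE => /andP [/ltn_trans]; apply.
- apply/forallP => x; apply/forallP => y; apply/implyP => xy.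
  by rewrite !ffunE -neq_ltn (inj_eq rk_inj).
Qed.

Definition rank_order (rk : A -> nat) (rk_inj : injective rk) : sorder A :=
  exist (@is_strict_total A) _ (rank_order_subproof rk_inj).

Lemma prefers_rank_order rk (rk_inj : injective rk) x y :
  prefers (rank_order rk_inj) x y = (rk x < rk y)%N.
Proof. by rewrite /prefers ffunE. Qed.

Lemma two_voter_subproof (o1 o2 : sorder A) :
  is_profile [fmap i : [fset 1%N; 2%N] => if val i == 1%N then o1 else o2].
Proof. by rewrite /is_profile /= -cardfs_eq0 cardfs2 in_fset2. Qed.

Definition two_voter_profile (o1 o2 : sorder A) : profile A :=
  exist (@is_profile A) _ (two_voter_subproof o1 o2).

Lemma card_fset12 (P : pred nat) :
  #|[set i : [fset 1%N; 2%N] | P (val i)]| = (P 1%N + P 2%N)%N.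
Proof.
rewrite cardsE -sum1_card -(big_seq_fsetE _ _ P (fun=> 1%N)).
by rewrite big_mkcond big_fsetU1 ?big_seq_fset1 ?inE.
Qed.

Lemma margin_two_voter o1 o2 x y :
  margin (two_voter_profile o1 o2) x y =
  ((prefers o1 x y + prefers o2 x y)%:Z - (prefers o1 y x + prefers o2 y x)%:Z)%R.
Proof.
have count u v : #|[set i | prefers (sval (two_voter_profile o1 o2) i) u v]| =
                 (prefers o1 u v + prefers o2 u v)%N.
  rewrite -(card_fset12 (fun k => prefers (if k == 1%N then o1 else o2) u v)).
  by apply: eq_card => i; rewrite !inE ffunE.
by rewrite /margin !count.
Qed.

Lemma maj_gt_two_voter o1 o2 x y :
  prefers o1 x y -> prefers o2 x y -> maj_gt (two_voter_profile o1 o2) x y.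
Proof.
move=> xy1 xy2; rewrite maj_gtE margin_two_voter xy1 xy2.
by rewrite (negbTE (prefers_asym xy1)) (negbTE (prefers_asym xy2)).
Qed.

End TwoVoterProfiles.

Section TieProfile.
Variables (A : finType) (X : {set A}).

Let n := #|A|.
Let idx (x : A) : nat := enum_rank x.

Lemma idx_lt x : (idx x < n)%N. Proof. exact: ltn_ord. Qed.

Lemma idx_inj : injective idx.
Proof. by move=> x y /ord_inj /enum_rank_inj. Qed.

Definition rank_up x := if x \in X then idx x else (n.+1 + idx x)%N.
Definition rank_down x := if x \in X then (n - idx x)%N else (n.+1 + idx x)%N.

Lemma rank_up_inj : injective rank_up.
Proof.
move=> x y; rewrite /rank_up => eq_xy; apply: idx_inj.
by move: (idx_lt x) (idx_lt y); case: ifP eq_xy => _; case: ifP => _; lia.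
Qed.

Lemma rank_down_inj : injective rank_down.
Proof.
move=> x y; rewrite /rank_down => eq_xy; apply: idx_inj.
by move: (idx_lt x) (idx_lt y); case: ifP eq_xy => _; case: ifP => _; lia.
Qed.

Definition tie_profile : profile A :=
  two_voter_profile (rank_order rank_up_inj) (rank_order rank_down_inj).

Lemma maj_gt_tie_profile x y : x \in X -> y \notin X -> maj_gt tie_profile x y.
Proof.
move=> xX yNX; move: (idx_lt x) (idx_lt y) => ltx lty.
apply: maj_gt_two_voter;
  by rewrite prefers_rank_order /rank_up /rank_down xX (negbTE yNX); lia.
Qed.

Lemma margin_tie_profile x y : x \in X -> y \in X -> margin tie_profile x y = 0%R.
Proof.
move=> xX yX; move: (idx_lt x) (idx_lt y) => ltx lty.
rewrite margin_two_voter !prefers_rank_order /rank_up /rank_down xX yX.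
have -> : (n - idx x < n - idx y)%N = (idx y < idx x)%N by apply/idP/idP; lia.
have -> : (n - idx y < n - idx x)%N = (idx x < idx y)%N by apply/idP/idP; lia.
by rewrite addnC subrr.
Qed.

Lemma top_cycle_tie_profile : X != set0 -> top_cycle tie_profile = X.
Proof.
move=> X0; apply: top_cycle_eq.
  apply/andP; split=> //; apply/forall_inP => x xX; apply/forall_inP => y.
  by rewrite inE; apply: maj_gt_tie_profile.
move=> Y /andP [/set0Pn [y yY] /forall_inP domY]; apply/subsetP => x xX.
apply: contraT => xNY; have yx : maj_gt tie_profile y x.
  by apply: (forall_inP (domY y yY)); rewrite inE.
case: (boolP (y \in X)) => [yX | yNX].
  by move: yx; rewrite maj_gtE margin_tie_profile.
by move: (maj_gt_asym yx); rewrite maj_gt_tie_profile.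
Qed.

End TieProfile.

Section TopCycleCharacterization.
Variable A : finType.
Implicit Types (f : profile A -> {set A}) (R : profile A).

Lemma top_cycle_robust : robust (@top_cycle A).
Proof. by move=> R R' /top_cycle_min. Qed.

Lemma top_cycle_set_non_imposition : set_non_imposition (@top_cycle A).
Proof. by move=> X X0; exists (tie_profile X); apply: top_cycle_tie_profile. Qed.

Lemma robust_dominant_set_rule_eq_top_cycle f R :
  dominant_set_rule f -> robust f -> set_non_imposition f -> f R = top_cycle R.
Proof.
move=> dom_f rob_f sni_f.
have domT := top_cycle_dominant (dom_f R).
have [R' fR'] := sni_f _ (proj1 (andP domT)).
apply/eqP; rewrite eqEsubset top_cycle_min ?andbT //.
by rewrite -fR'; apply: rob_f; rewrite fR'.
Qed.

End TopCycleCharacterization.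

Theorem lemma1 (A : finType) (f : profile A -> {set A}) :
  is_SCC f ->
  ((dominant_set_rule f /\ robust f /\ set_non_imposition f) <->
   (forall R : profile A, f R = top_cycle R)).
Proof.
move=> f0; split=> [[dom_f [rob_f sni_f]] R | f_tc].
  exact: robust_dominant_set_rule_eq_top_cycle R dom_f rob_f sni_f.
have dom_tc (R : profile A) : dominant R (top_cycle R).
  have /set0Pn [a _] := f0 R.
  by apply: (@top_cycle_dominant _ _ setT); apply/dominantT/set0Pn; exists a.
split; [by move=> R; rewrite f_tc; apply: dom_tc | split].
  by move=> R R'; rewrite !f_tc; apply: top_cycle_robust.
by move=> X /top_cycle_set_non_imposition [R tcR]; exists R; rewrite f_tc.
Qed.
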